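(* Let $X$ be a totally disconnected compact Hausdorff space and let $A$ be a unital $C(X)$-algebra such that every fibre $A_x$, $x\in X$, is properly infinite. Then $A$ is properly infinite.
   Context: A $C(X)$-algebra is a $C^*$-algebra $A$ with a unital $*$-homomorphism from $C(X)$ into the center of the multiplier algebra of $A$; its fibre at $x$ is $A_x=A/C_0(X\setminus\{x\})A$. A unital $C^*$-algebra is properly infinite if there are mutually orthogonal projections $e,f$ with $e\sim1\sim f$ (Murray–von Neumann equivalence). *)

From HB Require Import structures.
From mathcomp Require Import all_boot all_order all_algebra.
From mathcomp Require Import all_classical all_reals topology normedtype.
From mathcomp.real_closed Require Import complex.

Set Implicit Arguments.
Unset Strict Implicit.
Unset Printing Implicit Defensive.

Import Order.TTheory GRing.Theory Num.Theory.
Import numFieldTopology.Exports numFieldNormedType.Exports.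
Local Open Scope ring_scope.

(* algebra is allowed.                                                      *)

Record UCstarAlg (R : realType) := {
  cs_car :> lmodType R[i];
  cs_mul : cs_car -> cs_car -> cs_car;
  cs_one : cs_car;
  cs_star : cs_car -> cs_car;
  cs_norm : cs_car -> R;
  cs_mulA : forall a b c, cs_mul a (cs_mul b c) = cs_mul (cs_mul a b) c;
  cs_mulDl : forall a b c, cs_mul (a + b) c = cs_mul a c + cs_mul b c;
  cs_mulDr : forall a b c, cs_mul a (b + c) = cs_mul a b + cs_mul a c;
  cs_mul1l : forall a, cs_mul cs_one a = a;
  cs_mul1r : forall a, cs_mul a cs_one = a;
  cs_scaleAl : forall (k : R[i]) a b, cs_mul (k *: a) b = k *: cs_mul a b;
  cs_scaleAr : forall (k : R[i]) a b, cs_mul a (k *: b) = k *: cs_mul a b;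
  cs_starD : forall a b, cs_star (a + b) = cs_star a + cs_star b;
  cs_starZ : forall (k : R[i]) a, cs_star (k *: a) = conjc k *: cs_star a;
  cs_starM : forall a b, cs_star (cs_mul a b) = cs_mul (cs_star b) (cs_star a);
  cs_starK : forall a, cs_star (cs_star a) = a;
  cs_norm_ge0 : forall a, 0 <= cs_norm a;
  cs_norm_eq0 : forall a, cs_norm a = 0 -> a = 0;
  cs_normD : forall a b, cs_norm (a + b) <= cs_norm a + cs_norm b;
  cs_normZ : forall (k : R[i]) a, cs_norm (k *: a) = Normc.normc k * cs_norm a;
  cs_normM : forall a b, cs_norm (cs_mul a b) <= cs_norm a * cs_norm b;
  cs_cstar : forall a, cs_norm (cs_mul (cs_star a) a) = cs_norm a ^+ 2;
  cs_complete : forall u : nat -> cs_car,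
    (forall e : R, 0 < e -> exists N : nat, forall m n : nat,
        (N <= m)%N -> (N <= n)%N -> cs_norm (u m - u n) < e) ->
    exists l : cs_car, forall e : R, 0 < e -> exists N : nat,
        forall n : nat, (N <= n)%N -> cs_norm (u n - l) < e
}.

Arguments cs_mul {R} _ _ _.
Arguments cs_one {R} _.
Arguments cs_star {R} _ _.
Arguments cs_norm {R} _ _.

(* Continuity of a complex-valued function on X: continuity of its real and *)
(* imaginary parts (C carries the topology of R x R).                       *)
Definition ccontinuous (R : realType) (X : topologicalType) (f : X -> R[i]) :=
  continuous (fun t : X => (complex.Re (f t) : R)) /\ continuous (fun t : X => (complex.Im (f t) : R)).

(* A unital C(X)-algebra structure: a unital *-homomorphism from C(X) into   *)
(* the centre of A (A is unital, so its multiplier algebra is A itself).     *)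
(* phi is a function on all of X -> C, constrained only on C(X).            *)
Definition is_CX_structure (R : realType) (X : topologicalType)
    (A : UCstarAlg R) (phi : (X -> R[i]) -> A) :=
  [/\ (forall f g, ccontinuous f -> ccontinuous g ->
        phi (fun t => f t + g t) = phi f + phi g) /\
      (forall (k : R[i]) f, ccontinuous f -> phi (fun t => k * f t) = k *: phi f),
      (forall f g, ccontinuous f -> ccontinuous g ->
        phi (fun t => f t * g t) = cs_mul A (phi f) (phi g)),
      phi (fun _ => 1) = cs_one A,
      (forall f, ccontinuous f -> phi (fun t => conjc (f t)) = cs_star A (phi f))
    & (forall f, ccontinuous f -> forall a : A,
        cs_mul A (phi f) a = cs_mul A a (phi f))].

(* The closed ideal C_0(X \ {x}) A: the norm closure of the linear span of   *)
(* the products phi(f) a with f in C(X), f(x) = 0 (i.e. f in C_0(X\{x})).    *)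
Definition fibre_ideal (R : realType) (X : topologicalType)
    (A : UCstarAlg R) (phi : (X -> R[i]) -> A) (x : X) (y : A) : Prop :=
  forall e : R, 0 < e -> exists (n : nat) (fs : 'I_n -> X -> R[i]) (as_ : 'I_n -> A),
    (forall i, ccontinuous (fs i) /\ fs i x = 0) /\
    cs_norm A (y - \sum_(i < n) cs_mul A (phi (fs i)) (as_ i)) < e.

(* Equality in the fibre A_x = A / C_0(X\{x})A of the images of a and b.     *)
Definition fibre_eq (R : realType) (X : topologicalType)
    (A : UCstarAlg R) (phi : (X -> R[i]) -> A) (x : X) (a b : A) : Prop :=
  fibre_ideal phi x (a - b).

(* Proper infiniteness of the unital *-algebra whose elements are represented *)
(* by elements of A, with equality given by the relation eqr: there are      *)
(* mutually orthogonal projections e, f with e ~ 1 ~ f (Murray-von Neumann:   *)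
(* p ~ q iff p = v* v and q = v v* for some v).                              *)
Definition properly_infinite_rel (R : realType) (A : UCstarAlg R)
    (eqr : A -> A -> Prop) : Prop :=
  exists e f v w : A,
    [/\ eqr (cs_star A e) e /\ eqr (cs_mul A e e) e,
        eqr (cs_star A f) f /\ eqr (cs_mul A f f) f,
        eqr (cs_mul A e f) 0,
        eqr (cs_mul A (cs_star A v) v) e /\ eqr (cs_mul A v (cs_star A v)) (cs_one A)
      & eqr (cs_mul A (cs_star A w) w) f /\ eqr (cs_mul A w (cs_star A w)) (cs_one A)].

Definition properly_infinite (R : realType) (A : UCstarAlg R) : Prop :=
  @properly_infinite_rel R A (@eq A).

Definition fibre_properly_infinite (R : realType) (X : topologicalType)
    (A : UCstarAlg R) (phi : (X -> R[i]) -> A) (x : X) : Prop :=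
  @properly_infinite_rel R A (fibre_eq phi x).

From HB Require Import structures.
From mathcomp Require Import all_boot all_order all_algebra.
From mathcomp Require Import all_classical all_reals topology normedtype.
From mathcomp Require Import realfun numfun.
From mathcomp.real_closed Require Import complex.
From mathcomp Require Import ring lra.

(* Since [X] is compact, it suffices to cover it by finitely many clopen sets
   [U] for which the corner [p_U A], [p_U = phi(1_U)] a central projection,
   contains two isometries with orthogonal ranges: such corners glue along
   disjoint clopen sets, and the corner of [X] itself is [A].  At a point [x],
   proper infiniteness of [A_x] gives [t1], [t2] in [A] with [t1^* t1],
   [t2^* t2] close to [1] and [t1^* t2] close to [0] after cutting down by
   [p_U] for a small clopen neighbourhood [U] of [x] (a totally disconnected
   compact Hausdorff space has a basis of clopen sets).  Inverse square roots,
   obtained from Banach's fixed point theorem, and a Gram-Schmidt step turn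
   them into exact isometries of [p_U A]. *)

Set Implicit Arguments.
Unset Strict Implicit.
Unset Printing Implicit Defensive.

Import Order.TTheory GRing.Theory Num.Theory.
Import numFieldTopology.Exports numFieldNormedType.Exports.
Local Open Scope ring_scope.
Local Open Scope classical_set_scope.

Section CstarAlgebra.
Variables (R : realType) (A : UCstarAlg R).

Definition cstar_ring : Type := cs_car A.
HB.instance Definition _ := GRing.Lmodule.on cstar_ring.
HB.instance Definition _ := GRing.Zmodule_isPzRing.Build cstar_ring
  (@cs_mulA R A) (@cs_mul1l R A) (@cs_mul1r R A) (@cs_mulDl R A) (@cs_mulDr R A).

Local Notation T := cstar_ring.

Definition cstar (a : T) : T := cs_star A a.
Definition cnorm (a : T) : R := cs_norm A a.

Lemma cstarD (a b : T) : cstar (a + b) = cstar a + cstar b. Proof. exact: cs_starD. Qed.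
Lemma cstarM (a b : T) : cstar (a * b) = cstar b * cstar a. Proof. exact: cs_starM. Qed.
Lemma cstarK (a : T) : cstar (cstar a) = a. Proof. exact: cs_starK. Qed.
Lemma cstarZ (k : R[i]) (a : T) : cstar (k *: a) = conjc k *: cstar a.
Proof. exact: cs_starZ. Qed.

Lemma cstar0 : cstar 0 = 0.
Proof. by apply: (@addrI _ (cstar 0)); rewrite -cstarD !addr0. Qed.

Lemma cstarN (a : T) : cstar (- a) = - cstar a.
Proof. by apply: (@addrI _ (cstar a)); rewrite -cstarD !subrr cstar0. Qed.

Lemma cstarB (a b : T) : cstar (a - b) = cstar a - cstar b.
Proof. by rewrite cstarD cstarN. Qed.

Lemma cstar1 : cstar 1 = 1.
Proof.
have h : cstar 1 = cstar 1 * 1 by rewrite mulr1.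
by rewrite -[RHS](cstarK 1) {2}h cstarM cstarK mulr1.
Qed.

Lemma cscalerAl (k : R[i]) (a b : T) : k *: a * b = k *: (a * b).
Proof. exact: cs_scaleAl. Qed.
Lemma cscalerAr (k : R[i]) (a b : T) : a * (k *: b) = k *: (a * b).
Proof. exact: cs_scaleAr. Qed.

Lemma cnorm_ge0 (a : T) : 0 <= cnorm a. Proof. exact: cs_norm_ge0. Qed.
Lemma cnormD (a b : T) : cnorm (a + b) <= cnorm a + cnorm b. Proof. exact: cs_normD. Qed.
Lemma cnormM (a b : T) : cnorm (a * b) <= cnorm a * cnorm b. Proof. exact: cs_normM. Qed.
Lemma cnormZ (k : R[i]) (a : T) : cnorm (k *: a) = Normc.normc k * cnorm a.
Proof. exact: cs_normZ. Qed.

Lemma cnorm_cstar (a : T) : cnorm (cstar a * a) = cnorm a ^+ 2. Proof. exact: cs_cstar. Qed.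

Lemma cnorm0 : cnorm 0 = 0.
Proof. by rewrite -(scale0r (0 : T)) cnormZ Normc.normc0 mul0r. Qed.

Lemma cnormN (a : T) : cnorm (- a) = cnorm a.
Proof. by rewrite -scaleN1r cnormZ normcN Normc.normc1 mul1r. Qed.

Lemma cdistC (a b : T) : cnorm (a - b) = cnorm (b - a).
Proof. by rewrite -cnormN opprB. Qed.

Lemma cnormB (a b : T) : cnorm (a - b) <= cnorm a + cnorm b.
Proof. by rewrite -(cnormN b) cnormD. Qed.

Lemma cdist_triangle (a b c : T) : cnorm (a - c) <= cnorm (a - b) + cnorm (b - c).
Proof. by rewrite -[a - c](subrKA b) cnormD. Qed.

Lemma cnorm_sum n (F : 'I_n -> T) : cnorm (\sum_(i < n) F i) <= \sum_(i < n) cnorm (F i).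
Proof.
elim/big_ind2 : _ => [|a1 b1 a2 b2 h1 h2|//]; first by rewrite cnorm0.
exact: le_trans (cnormD _ _) (lerD h1 h2).
Qed.

Lemma cnorm_star (a : T) : cnorm (cstar a) = cnorm a.
Proof.
suff le_star (b : T) : cnorm b <= cnorm (cstar b).
  by apply/eqP; rewrite eq_le le_star -{2}(cstarK a) le_star.
have [->|b0] := eqVneq (cnorm b) 0; first exact: cnorm_ge0.
have pb : 0 < cnorm b by rewrite lt_def b0 cnorm_ge0.
by rewrite -(ler_pM2r pb) -expr2 -cnorm_cstar cnormM.
Qed.

Lemma cnorm_proj (p : T) : cstar p = p -> p * p = p -> cnorm p <= 1.
Proof.
move=> sp pp; have := cnorm_cstar p; rewrite sp pp expr2.
have [->|p0] := eqVneq (cnorm p) 0; first by [].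
by move/(congr1 (fun r => r / cnorm p)); rewrite divff // mulrK ?unitfE // => <-.
Qed.

Lemma cnorm1 : cnorm 1 <= 1. Proof. by apply: cnorm_proj; rewrite ?cstar1 ?mulr1. Qed.

Lemma cnorm_isometry (u : T) : cstar u * u = 1 -> cnorm u <= 1.
Proof.
move=> uu; have : cnorm u ^+ 2 <= 1 by rewrite -cnorm_cstar uu cnorm1.
by rewrite expr_le1 // cnorm_ge0.
Qed.

Lemma eq_dist_small (a b : T) : (forall e, 0 < e -> cnorm (a - b) < e) -> a = b.
Proof.
move=> small; apply/eqP; rewrite -subr_eq0; apply/eqP/cs_norm_eq0.
have [//|ne] := eqVneq (cnorm (a - b)) 0.
have pos : 0 < cnorm (a - b) by rewrite lt_def ne cnorm_ge0.
by have := small _ pos; rewrite ltxx.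
Qed.

Definition norm_cvg (u : nat -> T) (l : T) := forall e, 0 < e ->
  exists N, forall n, (N <= n)%N -> cnorm (u n - l) < e.

Lemma norm_cvg_selfadjoint (u : nat -> T) l :
  norm_cvg u l -> (forall k, cstar (u k) = u k) -> cstar l = l.
Proof.
move=> cv su; apply: eq_dist_small => e e0.
have [N HN] := cv _ (divr_gt0 e0 (ltr0n _ 2)).
apply: le_lt_trans (cdist_triangle _ (u N) _) _.
have h1 : cnorm (cstar l - u N) < e / 2 by rewrite -(su N) -cstarB cnorm_star cdistC HN.
have h2 : cnorm (u N - l) < e / 2 by rewrite HN.
lra.
Qed.

Lemma norm_cvg_commute (u : nat -> T) l c :
  norm_cvg u l -> (forall k, c * u k = u k * c) -> c * l = l * c.
Proof.
move=> cv cu; apply: eq_dist_small => e e0.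
have k0 : 0 < 2 * cnorm c + 1 by rewrite ltr_wpDl // mulr_ge0 // cnorm_ge0.
have [N HN] := cv _ (divr_gt0 e0 k0).
have -> : c * l - l * c = c * (l - u N) - (l - u N) * c.
  by rewrite mulrBr mulrBl cu opprB addrA subrK.
apply: le_lt_trans (cnormB _ _) _.
apply: le_lt_trans (lerD (cnormM _ _) (cnormM _ _)) _.
have := HN N (leqnn N); rewrite cdistC ltr_pdivlMr //.
have := cnorm_ge0 (l - u N); have := cnorm_ge0 c; nra.
Qed.

End CstarAlgebra.

Lemma geometric_eventually_lt (R : realType) (d e : R) : 0 <= d -> 0 < e ->
  exists N : nat, forall n, (N <= n)%N -> d * (2^-1) ^+ n < e.
Proof.
move=> d0 e0; exists (Num.bound (d / e)) => n Nn.
have n_lt_2n : (n%:R : R) < 2 ^+ n.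
  elim: n {Nn} => [|n IH]; first by rewrite expr0 ltr01.
  have : (1 : R) <= 2 ^+ n by rewrite exprn_ege1 // ler1n.
  rewrite exprS -natr1; lra.
have de_lt : d / e < 2 ^+ n.
  apply: lt_trans (archi_boundP (divr_ge0 d0 (ltW e0))) _.
  by apply: le_lt_trans n_lt_2n; rewrite ler_nat.
rewrite exprVn ltr_pdivrMr ?exprn_gt0 // mulrC.
by rewrite ltr_pdivrMr in de_lt.
Qed.

Section Contraction.
Variables (R : realType) (A : UCstarAlg R).
Local Notation T := (cstar_ring A).

Variables (F : T -> T) (rho : R) (P : T -> Prop).
Hypotheses (P0 : P 0) (rho_ge0 : 0 <= rho).
Hypothesis F_stable : forall z, P z -> cnorm z <= rho -> P (F z) /\ cnorm (F z) <= rho.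
Hypothesis F_contract : forall z z', P z -> P z' -> cnorm z <= rho -> cnorm z' <= rho ->
  cnorm (F z - F z') <= 2^-1 * cnorm (z - z').
Hypothesis P_closed : forall u l, (forall k, P (u k)) -> norm_cvg u l -> P l.

Let u k := iter k F 0.

Let u_in_ball k : P (u k) /\ cnorm (u k) <= rho.
Proof. by elim: k => [|k [Pk nk]]; [rewrite /u /= cnorm0 | exact: F_stable]. Qed.

Let d0 := cnorm (u 1%N - u 0%N).

Let u_step k : cnorm (u k.+1 - u k) <= d0 * (2^-1) ^+ k.
Proof.
elim: k => [|k IH]; first by rewrite expr0 mulr1.
have [P1 n1] := u_in_ball k.+1; have [P2 n2] := u_in_ball k.
apply: le_trans (F_contract P1 P2 n1 n2) _.
by rewrite exprS mulrCA ler_pM2l // invr_gt0 ltr0n.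
Qed.

Let u_dist k j :
  cnorm (u (k + j)%N - u k) <= 2 * d0 * ((2^-1) ^+ k - (2^-1) ^+ (k + j)).
Proof.
elim: j => [|j IH]; first by rewrite addn0 subrr cnorm0 subrr mulr0.
apply: le_trans (cdist_triangle _ (u (k + j)%N) _) _.
rewrite addnS; apply: le_trans (lerD (u_step _) IH) _.
rewrite exprS; set q := (2^-1) ^+ (k + j).
have -> : 2 * d0 * ((2^-1) ^+ k - 2^-1 * q) = d0 * q + 2 * d0 * ((2^-1) ^+ k - q).
  by rewrite !mulrBr; lra.
by [].
Qed.

Let u_cauchy e : 0 < e -> exists N : nat, forall m n : nat,
  (N <= m)%N -> (N <= n)%N -> cnorm (u m - u n) < e.
Proof.
move=> e0; have d0_ge0 : 0 <= d0 by exact: cnorm_ge0.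
have [N HN] := geometric_eventually_lt (mulr_ge0 (ler0n R 2) d0_ge0) e0.
exists N => m n Nm Nn.
wlog nm_ : m n Nm Nn / (n <= m)%N.
  move=> W; case: (leqP n m) => [|/ltnW] h; first exact: W.
  by rewrite cdistC; apply: W.
rewrite -(subnKC nm_); apply: le_lt_trans (u_dist _ _) _.
apply: le_lt_trans (HN _ Nn); apply: ler_wpM2l.
  by rewrite mulr_ge0.
have : 0 <= (2^-1 : R) ^+ (n + (m - n)) by rewrite exprn_ge0 // invr_ge0 ler0n.
lra.
Qed.

Lemma contraction_fixpoint : exists z, [/\ P z, cnorm z <= rho & F z = z].
Proof.
have [l ul] := cs_complete u_cauchy.
have Pl : P l by apply: (P_closed (u := u)) => // k; have [] := u_in_ball k.
have nl : cnorm l <= rho.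
  apply/ler_addgt0Pr => e e0; have [N HN] := ul e e0.
  have [_ nN] := u_in_ball N.
  rewrite -[l](subrK (u N)); apply: le_trans (cnormD _ _) _.
  by rewrite addrC lerD // cdistC ltW // HN.
exists l; split => //; apply: eq_dist_small => e e0.
have [N HN] := ul _ (divr_gt0 e0 (ltr0n _ 4)).
have [PN nN] := u_in_ball N.
apply: le_lt_trans (cdist_triangle _ (F (u N)) _) _.
have h1 := F_contract Pl PN nl nN.
have h2 : cnorm (F (u N) - l) < e / 4 by exact: (HN N.+1).
have h3 : cnorm (l - u N) < e / 4 by rewrite cdistC; exact: HN.
have := cnorm_ge0 (l - u N); lra.
Qed.

End Contraction.

Lemma normc_real (R : realType) (a : R) : 0 <= a -> Normc.normc (a%:C)%C = a.
Proof. by move=> a0; rewrite /Normc.normc /= expr0n addr0 sqrtr_sqr ger0_norm. Qed.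

Section FunctionalCalculus.
Variables (R : realType) (A : UCstarAlg R).
Local Notation T := (cstar_ring A).

Definition selfadjoint_bicommutant (a z : T) :=
  cstar z = z /\ forall c, c * a = a * c -> c * z = z * c.

Lemma selfadjoint_bicommutant0 a : selfadjoint_bicommutant a 0.
Proof. by split=> [|c _]; rewrite ?cstar0 ?mulr0 ?mul0r. Qed.

Lemma selfadjoint_bicommutant_closed a u l :
  (forall k, selfadjoint_bicommutant a (u k)) -> norm_cvg u l ->
  selfadjoint_bicommutant a l.
Proof.
move=> Pu cv; split; first by apply: (norm_cvg_selfadjoint cv) => k; case: (Pu k).
by move=> c ca; apply: (norm_cvg_commute cv) => k; case: (Pu k) => _ /(_ c ca).
Qed.

Lemma inverse_one_sub (y : T) : cstar y = y -> cnorm y <= 2^-1 ->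
  exists w, [/\ selfadjoint_bicommutant y w, cnorm w <= 2 & 1 + y * w = w].
Proof.
move=> sy ny.
apply: (contraction_fixpoint (F := fun w => 1 + y * w) (rho := 2)
  (selfadjoint_bicommutant0 y)) => //.
- move=> z [sz cz] nz; split; first split.
  + by rewrite cstarD cstar1 cstarM sz sy -cz.
  + by move=> c cy; rewrite mulrDr mulrDl mulr1 mul1r mulrA cy -!mulrA (cz _ cy).
  + apply: le_trans (cnormD _ _) _; apply: le_trans (lerD (cnorm1 A) (cnormM _ _)) _.
    have : cnorm y * cnorm z <= 2^-1 * 2 by apply: ler_pM => //; exact: cnorm_ge0.
    lra.
- move=> z z' _ _ _ _; rewrite opprD addrACA subrr add0r -mulrBr.
  by apply: le_trans (cnormM _ _) _; apply: ler_wpM2r => //; exact: cnorm_ge0.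
- exact: selfadjoint_bicommutant_closed.
Qed.

Lemma sqrt_one_sub (u : T) : cstar u = u -> cnorm u <= 4^-1 ->
  exists z, [/\ selfadjoint_bicommutant u z, cnorm z <= 2^-1 & (1 - z) * (1 - z) = 1 - u].
Proof.
move=> su nu.
pose h : R[i] := (2^-1)%:C%C.
have nh : Normc.normc h = 2^-1 by rewrite normc_real // invr_ge0 ler0n.
have [z [[sz cz] nz ez]] : exists z,
    [/\ selfadjoint_bicommutant u z, cnorm z <= 2^-1 & h *: (u + z * z) = z].
  apply: (contraction_fixpoint (F := fun z => h *: (u + z * z)) (rho := 2^-1)
    (selfadjoint_bicommutant0 u)).
  - by rewrite invr_ge0 ler0n.
  - move=> z [sz cz] nz; split; first split.
    + by rewrite cstarZ conjc_real cstarD cstarM sz su.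
    + move=> c cu; rewrite cscalerAr cscalerAl mulrDr mulrDl cu.
      by rewrite mulrA (cz _ cu) -mulrA (cz _ cu) mulrA.
    + rewrite cnormZ nh; apply: le_trans (ler_wpM2l _ (cnormD _ _)) _.
        by rewrite invr_ge0 ler0n.
      have : cnorm (z * z) <= 2^-1 * 2^-1.
        by apply: le_trans (cnormM _ _) _; apply: ler_pM => //; exact: cnorm_ge0.
      lra.
  - move=> z z' _ _ nz nz'.
    rewrite -scalerBr cnormZ nh opprD addrACA subrr add0r.
    have -> : z * z - z' * z' = z * (z - z') + (z - z') * z'.
      by rewrite mulrBr mulrBl addrA subrK.
    have n0 := cnorm_ge0 (z - z').
    have h1 : cnorm (z * (z - z')) <= 2^-1 * cnorm (z - z').
      by apply: le_trans (cnormM _ _) _; apply: ler_wpM2r.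
    have h2 : cnorm ((z - z') * z') <= 2^-1 * cnorm (z - z').
      by apply: le_trans (cnormM _ _) _; rewrite mulrC; apply: ler_wpM2r.
    have := cnormD (z * (z - z')) ((z - z') * z'); lra.
  - exact: selfadjoint_bicommutant_closed.
exists z; split => //.
have hh : h + h = 1 by rewrite /h -rmorphD /=; congr (_%:C)%C; lra.
have twice_z : z + z = u + z * z by rewrite -{1 2}ez -scalerDl hh scale1r.
have -> : u = z + z - z * z by rewrite twice_z addrK.
by rewrite mulrBr mulr1 mulrBl mul1r opprB !opprD opprK !addrA addrAC.
Qed.

Lemma inv_sqrt_one_sub (y : T) : cstar y = y -> cnorm y <= 8^-1 ->
  exists r : T, [/\ cstar r = r, r * (1 - y) * r = 1 & cnorm r <= 3/2].
Proof.
move=> sy ny.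
have [w [[sw cw] nw ew]] : exists w,
    [/\ selfadjoint_bicommutant y w, cnorm w <= 2 & 1 + y * w = w].
  by apply: inverse_one_sub => //; lra.
have wy : y * w = w * y by apply: cw.
have n1w : cnorm (1 - w) <= 4^-1.
  rewrite -{1}ew opprD addNKr cnormN; apply: le_trans (cnormM _ _) _.
  have : cnorm y * cnorm w <= 8^-1 * 2 by apply: ler_pM => //; exact: cnorm_ge0.
  lra.
have s1w : cstar (1 - w) = 1 - w by rewrite cstarB cstar1 sw.
have [z [[sz cz] nz ez]] := sqrt_one_sub s1w n1w.
have yz : y * z = z * y by apply: cz; exact: commrB (commr1 _) wy.
exists (1 - z); split.
- by rewrite cstarB cstar1 sz.
- have rcomm : (1 - y) * (1 - z) = (1 - z) * (1 - y).
    exact: commrB (commr1 _) (commr_sym (commrB (commr1 _) (commr_sym yz))).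
  by rewrite -mulrA rcomm mulrA ez subKr mulrBr mulr1 -wy -[X in X - _]ew addrK.
- by apply: le_trans (cnormB _ _) _; have := cnorm1 A; lra.
Qed.

End FunctionalCalculus.

Section Corner.
Variables (R : realType) (A : UCstarAlg R).
Local Notation T := (cstar_ring A).

(* For a central projection [p], this says that the corner [pA] (with unit [p])
   contains two isometries [p s1], [p s2] with orthogonal ranges, i.e. that
   [pA] is properly infinite. *)
Definition corner_properly_infinite (p : T) := exists s1 s2 : T,
  [/\ p * (cstar s1 * s1) = p, p * (cstar s2 * s2) = p & p * (cstar s1 * s2) = 0].

Lemma corner_properly_infinite0 : corner_properly_infinite 0.
Proof. by exists 0, 0; rewrite !mul0r. Qed.

Lemma corner_properly_infinite_sub (p q : T) :
  p * q = p -> corner_properly_infinite q -> corner_properly_infinite p.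
Proof.
move=> pq [s1 [s2 [h1 h2 h3]]]; exists s1, s2.
by rewrite -{1 3 5}pq -!mulrA h1 h2 h3 pq mulr0.
Qed.

Lemma properly_infinite_corner1 :
  corner_properly_infinite 1 -> properly_infinite A.
Proof.
move=> [s1 [s2]]; rewrite !mul1r => -[h1 h2 h3].
have range_proj (s : T) : cstar s * s = 1 ->
    cstar (s * cstar s) = s * cstar s /\ s * cstar s * (s * cstar s) = s * cstar s.
  by move=> hs; rewrite cstarM cstarK mulrA -[s * _ * s]mulrA hs mulr1.
have orth : s1 * cstar s1 * (s2 * cstar s2) = 0.
  by rewrite mulrA -[s1 * _ * s2]mulrA h3 mulr0 mul0r.
exists (s1 * cstar s1), (s2 * cstar s2), (cstar s1), (cstar s2).
by split; rewrite ?cs_starK; [exact: range_proj | exact: range_proj | exact: orth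
  | split => //; exact: h1 | split => //; exact: h2].
Qed.

Section CentralProjection.
Variables (p : T) (sp : cstar p = p) (pp : p * p = p) (pc : forall a, p * a = a * p).

Lemma cstar_proj_mul (x : T) : p * (cstar x * x) = cstar (p * x) * (p * x).
Proof. by rewrite cstarM sp -mulrA [p * (p * x)]mulrA pp !mulrA (pc (cstar x)). Qed.

Lemma corner_isometry_of_almost (t : T) : cnorm (p * (cstar t * t) - p) <= 8^-1 ->
  exists r, [/\ p * (cstar (t * r) * (t * r)) = p, cstar r = r & cnorm r <= 3/2].
Proof.
move=> nt.
(* [r = (1 - p + p t^* t)^(-1/2)] *)
pose y := p - p * (cstar t * t).
have sy : cstar y = y by rewrite /y cstarB cstarM cstarM cstarK sp -pc.
have ny : cnorm y <= 8^-1 by rewrite /y cdistC.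
have [r [sr rer nr]] := inv_sqrt_one_sub sy ny.
have py : p * y = y by rewrite /y mulrBr pp [p * (p * _)]mulrA pp.
have e : p * (cstar t * t) = p * (1 - y) by rewrite mulrBr mulr1 py /y opprB subrKC.
exists r; split => //.
have -> : p * (cstar (t * r) * (t * r)) = r * (p * (cstar t * t)) * r.
  by rewrite cstarM sr !mulrA (pc r).
by rewrite e !mulrA -(pc r) -(mulrA p) -mulrA rer mulr1.
Qed.

(* Gram-Schmidt in the corner: make [t1] an isometry [s1], remove from [t2] its
   component [s1 s1^* t2] along the range of [s1], and make the rest an isometry. *)
Lemma corner_properly_infinite_of_almost (t1 t2 : T) :
  cnorm (p * (cstar t1 * t1) - p) <= 32^-1 -> cnorm (p * (cstar t2 * t2) - p) <= 32^-1 ->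
  cnorm (p * (cstar t1 * t2)) <= 32^-1 -> corner_properly_infinite p.
Proof.
move=> h1 h2 h3.
have h1' : cnorm (p * (cstar t1 * t1) - p) <= 8^-1 by apply: le_trans h1 _; lra.
have [r1 [e1 sr1 nr1]] := corner_isometry_of_almost h1'.
set s1 := t1 * r1 in e1.
pose x := cstar s1 * t2.
pose t2' := t2 - s1 * x.
have sx : cstar x = cstar t2 * s1 by rewrite /x cstarM cstarK.
have orth : p * (cstar s1 * t2') = 0.
  by rewrite /t2' mulrBr [cstar s1 * (s1 * x)]mulrA mulrBr [p * (_ * x)]mulrA e1 subrr.
have E : cstar t2' * t2' =
    cstar t2 * t2 - cstar x * x - (cstar x * x - cstar x * (cstar s1 * s1 * x)).
  rewrite /t2' cstarB cstarM sx mulrBl !mulrBr.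
  rewrite [cstar t2 * (s1 * x)]mulrA -sx -[cstar x * cstar s1 * t2]mulrA.
  by rewrite -[cstar x * cstar s1 * (s1 * x)]mulrA [cstar s1 * (s1 * x)]mulrA.
have pxx : p * (cstar x * (cstar s1 * s1 * x)) = p * (cstar x * x).
  rewrite [p * _]mulrA (pc (cstar x)) -mulrA [p * (_ * x)]mulrA e1.
  by rewrite mulrA -(pc (cstar x)) mulrA.
have ht2' : cnorm (p * (cstar t2' * t2') - p) <= 8^-1.
  have -> : p * (cstar t2' * t2') - p = p * (cstar t2 * t2) - p - p * (cstar x * x).
    by rewrite E !mulrBr pxx subrr subr0 addrAC.
  apply: le_trans (cnormB _ _) _.
  have px : p * x = r1 * (p * (cstar t1 * t2)).
    by rewrite /x /s1 cstarM sr1 !mulrA (pc r1).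
  have npx : cnorm (p * x) <= 3/2 * 32^-1.
    by rewrite px; apply: le_trans (cnormM _ _) _; apply: ler_pM => //; exact: cnorm_ge0.
  rewrite [p * (cstar x * x)]cstar_proj_mul cnorm_cstar.
  have := cnorm_ge0 (p * x); nra.
have [r2 [e2 sr2 nr2]] := corner_isometry_of_almost ht2'.
exists s1, (t2' * r2); split => //.
by rewrite [cstar s1 * _]mulrA mulrA orth mul0r.
Qed.

End CentralProjection.

Section OrthogonalSum.
Variables (p q : T) (sp : cstar p = p) (sq : cstar q = q)
  (pc : forall a, p * a = a * p) (qc : forall a, q * a = a * q)
  (pp : p * p = p) (qq : q * q = q) (pq : p * q = 0).

Let qp : q * p = 0. Proof. by rewrite -pc. Qed.

Let central_mid (r s x y : T) : (forall a, r * a = a * r) -> (forall a, s * a = a * s) ->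
  x * r * (s * y) = r * s * (x * y).
Proof. by move=> rc sc; rewrite -(rc x) -mulrA [x * (s * y)]mulrA -(sc x) !mulrA. Qed.

Lemma orthogonal_sum_inner (a b c d : T) :
  (p + q) * (cstar (p * a + q * b) * (p * c + q * d)) =
  p * (cstar a * c) + q * (cstar b * d).
Proof.
have inner : (cstar a * p + cstar b * q) * (p * c + q * d) =
    p * (cstar a * c) + q * (cstar b * d).
  rewrite mulrDl !mulrDr (central_mid _ _ pc pc) (central_mid _ _ pc qc).
  rewrite (central_mid _ _ qc pc) (central_mid _ _ qc qc).
  by rewrite pp qq pq qp !mul0r addr0 add0r.
rewrite cstarD !cstarM sp sq inner mulrDl !mulrDr !mulrA pp qq pq qp !mul0r.
by rewrite addr0 add0r.
Qed.

Lemma corner_properly_infinite_add :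
  corner_properly_infinite p -> corner_properly_infinite q ->
  corner_properly_infinite (p + q).
Proof.
move=> [a1 [a2 [ha1 ha2 ha12]]] [b1 [b2 [hb1 hb2 hb12]]].
exists (p * a1 + q * b1), (p * a2 + q * b2).
by rewrite !orthogonal_sum_inner ha1 ha2 ha12 hb1 hb2 hb12 addr0.
Qed.

End OrthogonalSum.
End Corner.

Section ComplexContinuity.
Variables (R : realType) (X : topologicalType).
Implicit Types f g : X -> R[i].

Lemma complex_ReD (a b : R[i]) : complex.Re (a + b) = complex.Re a + complex.Re b.
Proof. by case: a; case: b. Qed.
Lemma complex_ImD (a b : R[i]) : complex.Im (a + b) = complex.Im a + complex.Im b.
Proof. by case: a; case: b. Qed.
Lemma complex_ReM (a b : R[i]) :
  complex.Re (a * b) = complex.Re a * complex.Re b - complex.Im a * complex.Im b.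
Proof. by case: a => ? ?; case: b. Qed.
Lemma complex_ImM (a b : R[i]) :
  complex.Im (a * b) = complex.Re a * complex.Im b + complex.Im a * complex.Re b.
Proof. by case: a => ? ?; case: b. Qed.

Lemma complex_ReJ (a : R[i]) : complex.Re (conjc a) = complex.Re a.
Proof. by case: a. Qed.
Lemma complex_ImJ (a : R[i]) : complex.Im (conjc a) = - complex.Im a.
Proof. by case: a. Qed.

Lemma ccontinuousD f g :
  ccontinuous f -> ccontinuous g -> ccontinuous (fun t => f t + g t).
Proof.
move=> [f1 f2] [g1 g2]; split => x.
- under eq_fun do rewrite complex_ReD; exact: continuousD (f1 x) (g1 x).
- under eq_fun do rewrite complex_ImD; exact: continuousD (f2 x) (g2 x).
Qed.

Lemma ccontinuousM f g :
  ccontinuous f -> ccontinuous g -> ccontinuous (fun t => f t * g t).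
Proof.
move=> [f1 f2] [g1 g2]; split => x.
- under eq_fun do rewrite complex_ReM.
  exact: continuousB (continuousM (f1 x) (g1 x)) (continuousM (f2 x) (g2 x)).
- under eq_fun do rewrite complex_ImM.
  exact: continuousD (continuousM (f1 x) (g2 x)) (continuousM (f2 x) (g1 x)).
Qed.

Lemma ccontinuousJ f : ccontinuous f -> ccontinuous (fun t => conjc (f t)).
Proof.
move=> [f1 f2]; split => x.
- by under eq_fun do rewrite complex_ReJ; exact: f1.
- by under eq_fun do rewrite complex_ImJ; exact: continuousN (f2 x).
Qed.

Lemma ccontinuous_cst (k : R[i]) : ccontinuous (fun _ : X => k).
Proof. by split => x; apply: cvg_cst. Qed.

Lemma ccontinuous_real (q : X -> R) : continuous q -> ccontinuous (fun t => (q t)%:C%C).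
Proof. by move=> cq; split => //= x; apply: cvg_cst. Qed.

Lemma ccontinuousZ (k : R[i]) f : ccontinuous f -> ccontinuous (fun t => k * f t).
Proof. by move=> cf; apply: ccontinuousM => //; apply: ccontinuous_cst. Qed.

Lemma indic_complex (U : set X) t : (\1_U t : R[i]) = (\1_U t : R)%:C%C.
Proof. by rewrite !indicE; case: (t \in U). Qed.

Lemma continuous_indic (U : set X) : clopen U -> continuous (\1_U : X -> R).
Proof.
move=> [oU cU] x; apply: (@near_cst_continuous _ _ (\1_U x : R)).
have [Ux|nUx] := boolP (x \in U).
- have : nbhs x U by apply: open_nbhs_nbhs; split => //; rewrite -inE.
  by apply: filterS => t Ut; rewrite !indicE Ux mem_set.
- have : nbhs x (~` U).
    apply: open_nbhs_nbhs; split; first exact: closed_openC.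
    by move=> Ux; rewrite mem_set in nUx.
  by apply: filterS => t nUt; rewrite !indicE (negbTE nUx) memNset.
Qed.

Lemma ccontinuous_indic (U : set X) : clopen U -> ccontinuous (\1_U : X -> R[i]).
Proof.
move=> cU; rewrite (_ : \1_U = fun t => (\1_U t : R)%:C%C).
  exact/ccontinuous_real/continuous_indic.
by apply: funext => t; rewrite indic_complex.
Qed.

End ComplexContinuity.

Section CXAlgebra.
Variables (R : realType) (X : topologicalType) (A : UCstarAlg R).
Variables (phi : (X -> R[i]) -> A) (hphi : is_CX_structure phi).
Local Notation T := (cstar_ring A).
Local Notation ph f := (phi f : T).
Implicit Types f g : X -> R[i].

Lemma phiD f g : ccontinuous f -> ccontinuous g -> ph (fun t => f t + g t) = ph f + ph g.
Proof. by case: hphi => [[+ _] _ _ _ _]; apply. Qed.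
Lemma phiZ k f : ccontinuous f -> ph (fun t => k * f t) = k *: ph f.
Proof. by case: hphi => [[_ +] _ _ _ _]; apply. Qed.
Lemma phiM f g : ccontinuous f -> ccontinuous g -> ph (fun t => f t * g t) = ph f * ph g.
Proof. by case: hphi => [_ + _ _ _]; apply. Qed.
Lemma phi1 : ph (fun _ => 1) = 1.
Proof. by case: hphi. Qed.
Lemma phiJ f : ccontinuous f -> ph (fun t => conjc (f t)) = cstar (ph f).
Proof. by case: hphi => [_ _ _ + _]; apply. Qed.
Lemma phi_central f (a : T) : ccontinuous f -> ph f * a = a * ph f.
Proof. by case: hphi => [_ _ _ _ +] cf; apply. Qed.

Lemma phi0 : ph (fun _ => 0) = 0.
Proof.
have := phiD (ccontinuous_cst X (0 : R[i])) (ccontinuous_cst X 0).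
under eq_fun do rewrite addr0.
by move=> h; apply: (@addrI _ (ph (fun _ => 0))); rewrite addr0 -h.
Qed.

(* A continuous real [q] with [|q| <= 1] is the real part of the unitary
   [q + i sqrt(1 - q^2)]. *)
Lemma cnorm_phi_real (q : X -> R) : continuous q -> (forall t, `|q t| <= 1) ->
  cnorm (ph (fun t => (q t)%:C%C)) <= 1.
Proof.
move=> cq q1.
pose s t := Num.sqrt (1 - q t * q t).
have cs : continuous s.
  move=> x; have c1 : {for x, continuous (fun t => 1 - q t * q t)}.
    exact: continuousB (cvg_cst (1 : R)) (continuousM (cq x) (cq x)).
  exact: continuous_comp c1 (@sqrt_continuous R _).
pose g t : R[i] := Complex (q t) (s t).
have cg : ccontinuous g by split.
have cgJ := ccontinuousJ cg.
have qq t : q t * q t <= 1 by have := q1 t; rewrite ler_norml => /andP[]; nra.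
have unitary t : conjc (g t) * g t = 1.
  have ss : s t * s t = 1 - q t * q t by rewrite /s -expr2 sqr_sqrtr // subr_ge0.
  apply/eqP; rewrite eq_complex /=; apply/andP; split; apply/eqP; last by ring.
  by rewrite mulNr opprK ss addrC subrK.
have iso : cstar (ph g) * ph g = 1.
  rewrite -phiJ // -phiM // -phi1; congr (phi _).
  by apply: funext => t; exact: unitary.
have re_g t : g t + conjc (g t) = 2%:C%C * (q t)%:C%C.
  by apply/eqP; rewrite eq_complex /=; apply/andP; split; apply/eqP; ring.
have two_re : ph g + cstar (ph g) = 2%:C%C *: ph (fun t => (q t)%:C%C).
  rewrite -phiJ // -phiD // -phiZ; last exact: ccontinuous_real.
  by congr (phi _); apply: funext => t; exact: re_g.
have := cnormD (ph g) (cstar (ph g)); rewrite two_re cnormZ normc_real ?ler0n //.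
rewrite cnorm_star; have := cnorm_isometry iso.
have := cnorm_ge0 (ph (fun t => (q t)%:C%C)); lra.
Qed.

Lemma cnorm_phi_le (h : X -> R[i]) (M : R) : ccontinuous h -> 0 < M ->
  (forall t, `|complex.Re (h t)| <= M /\ `|complex.Im (h t)| <= M) ->
  cnorm (ph h) <= 2 * M.
Proof.
move=> [hr hi] M0 hM.
pose q1 t := complex.Re (h t) / M.
pose q2 t := complex.Im (h t) / M.
have c1 : continuous q1 by move=> x; exact: continuousM (hr x) (cvg_cst _).
have c2 : continuous q2 by move=> x; exact: continuousM (hi x) (cvg_cst _).
have b1 t : `|q1 t| <= 1.
  by rewrite /q1 normrM normfV (gtr0_norm M0) ler_pdivrMr // mul1r; case: (hM t).
have b2 t : `|q2 t| <= 1.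
  by rewrite /q2 normrM normfV (gtr0_norm M0) ler_pdivrMr // mul1r; case: (hM t).
have cq1 := ccontinuous_real c1; have cq2 := ccontinuous_real c2.
have cq2i := ccontinuousZ 'i%C cq2.
have -> : h = fun t => M%:C%C * ((q1 t)%:C%C + 'i%C * (q2 t)%:C%C).
  apply: funext => t; rewrite /q1 /q2; case: (h t) => a b /=.
  by apply/eqP; rewrite eq_complex /=; apply/andP; split; apply/eqP; field; rewrite gt_eqF.
rewrite phiZ; last exact: ccontinuousD.
rewrite phiD // phiZ // cnormZ normc_real; last exact: ltW.
have ni : Normc.normc ('i%C : R[i]) = 1.
  by rewrite /Normc.normc expr0n expr1n add0r sqrtr1.
rewrite mulrC ler_wpM2r ?(ltW M0) //.
apply: le_trans (cnormD _ _) _; rewrite cnormZ ni mul1r.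
by have := cnorm_phi_real c1 b1; have := cnorm_phi_real c2 b2; lra.
Qed.

Definition indic_proj (U : set X) : T := phi \1_U.

Lemma indic_proj_central (U : set X) (a : T) : clopen U ->
  indic_proj U * a = a * indic_proj U.
Proof. by move=> cU; apply/phi_central/ccontinuous_indic. Qed.

Lemma indic_projI (U V : set X) : clopen U -> clopen V ->
  indic_proj (U `&` V) = indic_proj U * indic_proj V.
Proof. by move=> cU cV; rewrite /indic_proj indicI -phiM //; exact: ccontinuous_indic. Qed.

Lemma indic_proj_cstar (U : set X) : clopen U -> cstar (indic_proj U) = indic_proj U.
Proof.
move=> cU; rewrite /indic_proj -phiJ; last exact: ccontinuous_indic.
by congr (phi _); apply: funext => t; rewrite indic_complex conjc_real.
Qed.

Lemma indic_proj_idem (U : set X) : clopen U -> indic_proj U * indic_proj U = indic_proj U.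
Proof. by move=> cU; rewrite -indic_projI ?setIid. Qed.

Lemma indic_projT : indic_proj setT = 1.
Proof. by rewrite /indic_proj indicT phi1. Qed.

Lemma indic_proj0 : indic_proj set0 = 0.
Proof. by rewrite /indic_proj indic0 phi0. Qed.

Lemma indic_projU (U V : set X) : clopen U -> clopen V -> U `&` V = set0 ->
  indic_proj (U `|` V) = indic_proj U + indic_proj V.
Proof.
move=> cU cV UV0; rewrite /indic_proj -phiD; try exact: ccontinuous_indic.
congr (phi _); apply: funext => t; rewrite !indicE in_setU.
have [Ut|_] := boolP (t \in U); have [Vt|_] //= := boolP (t \in V);
  rewrite ?addr0 ?add0r //.
have : (U `&` V) t by split; exact/set_mem.
by rewrite UV0.
Qed.

End CXAlgebra.

Lemma compact_directed_cover (T : topologicalType) (K : set T) (G : set (set T)) :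
  compact K -> G set0 -> (forall U V, G U -> G V -> G (U `|` V)) ->
  (forall U, G U -> open U) ->
  (forall y, K y -> exists2 U, G U & U y) -> exists2 U, G U & K `<=` U.
Proof.
move=> cK G0 GU Gop Gcov.
pose F := filter_from G (fun U => [set V | G V /\ U `<=` V]).
have FF : Filter F.
  apply: filter_from_filter; first by exists set0.
  move=> U V GUU GVV; exists (U `|` V); first exact: GU.
  by move=> W [GW UVW]; split; split => //; apply: subset_trans UVW => z ?; [left|right].
have /compact_near_coveringP/(_ _ F (fun V x' => V x') FF) := cK.
case=> [y Ky|M GM KM]; last by exists M => //; apply: KM; split.
have [U GUU Uy] := Gcov y Ky.
exists (U, [set V | G V /\ U `<=` V]); first split.
- by apply: open_nbhs_nbhs; split => //; exact: Gop.
- by exists U.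
- by case=> x' V /= [Ux' [_ UV]]; apply: UV.
Qed.

Section CompactHausdorff.
Variables (T : topologicalType) (hT : hausdorff_space T) (cT : compact [set: T]).

Definition quasi_component (x : T) :=
  \bigcap_(C in [set C : set T | clopen C /\ C x]) C.

Lemma quasi_component_refl x : quasi_component x x.
Proof. by move=> C []. Qed.

Lemma closed_quasi_component x : closed (quasi_component x).
Proof. by apply: closed_bigI => C [[]]. Qed.

Lemma clopen_sub_closed_compl x (K : set T) : closed K ->
  K `&` quasi_component x = set0 -> exists C, [/\ clopen C, C x & C `<=` ~` K].
Proof.
move=> cK KQ.
pose G := [set S : set T | exists C, [/\ clopen C, C x & S = ~` C]].
have [_ [C [cC Cx ->]] KC] : exists2 S, G S & K `<=` S.
  apply: compact_directed_cover.
  - exact: (subclosed_compact cK cT).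
  - by exists setT; split; [exact: clopenT | | rewrite setCT].
  - move=> _ _ [C1 [cC1 C1x ->]] [C2 [cC2 C2x ->]].
    by exists (C1 `&` C2); split; [exact: clopenI | | rewrite setCI].
  - by move=> _ [C [[_ cC] _ ->]]; exact: closed_openC.
  - move=> y Ky; have nQy : ~ quasi_component x y.
      by move=> Qy; suff : (K `&` quasi_component x) y by rewrite KQ.
    have [C [cC Cx] nCy] : exists2 C, clopen C /\ C x & ~ C y.
      apply: contrapT => h; apply: nQy => C hC.
      by apply: contrapT => nCy; apply: h; exists C.
    by exists (~` C) => //; exists C.
by exists C; split => // z Cz Kz; exact: KC Kz Cz.
Qed.

Lemma separate_closed (P0 P1 : set T) : closed P0 -> closed P1 -> P0 `&` P1 = set0 ->
  exists U V, [/\ open U, open V, P0 `<=` U, P1 `<=` V & U `&` V = set0].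
Proof.
move=> c0 c1 P01.
have nP1 : set_nbhs P0 (~` P1).
  apply/set_nbhsP; exists (~` P1); split => //; first exact: closed_openC.
  by move=> z P0z P1z; suff : (P0 `&` P1) z by rewrite P01.
have [W /set_nbhsP [U [oU P0U UW]] cWP1] := compact_normal hT cT c0 nP1.
exists U, (~` closure W); split => //.
- exact/closed_openC/closed_closure.
- by move=> z P1z cWz; exact: cWP1 cWz P1z.
- by apply/seteqP; split => // z [/UW Wz]; apply; exact: subset_closure.
Qed.

(* Separate [P0] and [P1] by open sets [U] and [V]; a clopen neighbourhood of
   [x] inside [U `|` V] meets [U] in a clopen set, which contains the
   quasi-component. *)
Lemma quasi_component_sub x (P0 P1 : set T) : closed P0 -> closed P1 ->
  P0 `&` P1 = set0 -> quasi_component x `<=` P0 `|` P1 -> P0 x ->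
  quasi_component x `<=` P0.
Proof.
move=> c0 c1 P01 QP P0x.
have [U [V [oU oV P0U P1V UV]]] := separate_closed c0 c1 P01.
have cUV : closed (~` (U `|` V)) by exact/open_closedC/openU.
have [|C [cC Cx CUV]] := clopen_sub_closed_compl (x := x) cUV.
  apply/seteqP; split => // z [nUVz /QP [/P0U|/P1V] Uz]; apply: nUVz; by [left|right].
have CU_CnV : C `&` U = C `&` ~` V.
  apply/seteqP; split => z [Cz h]; split => //.
  - by move=> Vz; suff : (U `&` V) z by rewrite UV.
  - by have /contrapT [] := CUV z Cz.
have cCU : clopen (C `&` U).
  split; first by apply: openI => //; case: cC.
  by rewrite CU_CnV; apply: closedI; [case: cC | exact: open_closedC].
move=> z Qz; have [_ Uz] := Qz _ (conj cCU (conj Cx (P0U x P0x))).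
have [//|P1z] := QP z Qz.
suff : (U `&` V) z by rewrite UV.
by split => //; exact: P1V.
Qed.

Lemma connected_quasi_component x : connected (quasi_component x).
Proof.
move=> B [b Bb] [O oO BO] [F cF BF].
have BQ : B `<=` quasi_component x by rewrite BO => z [].
pose B' := quasi_component x `&` ~` O.
have cQ : closed (quasi_component x) by exact: closed_quasi_component.
have cB : closed B by rewrite BF; exact: closedI.
have cB' : closed B' by apply: closedI => //; exact: open_closedC.
have BB' : B `&` B' = set0.
  by apply/seteqP; split => // w [+ [_ nOw]]; rewrite BO => -[].
have QBB' : quasi_component x `<=` B `|` B'.
  move=> z Qz; have [Oz|] := pselect (O z); last by right.
  by left; rewrite BO.
have [Bx|nBx] := pselect (B x).
  by apply/seteqP; split => //; exact: quasi_component_sub cB cB' BB' QBB' Bx.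
have Qx : quasi_component x x by exact: quasi_component_refl.
have B'x : B' x by case: (QBB' x Qx) => // /nBx.
have QB' : quasi_component x `<=` B'.
  apply: quasi_component_sub cB' cB _ _ B'x; first by rewrite setIC.
  by move=> z /QBB' [];[right|left].
suff : (B `&` B') b by rewrite BB'.
by split => //; apply: QB'; apply: BQ.
Qed.

Lemma totally_disconnected_zero_dimensional :
  totally_disconnected [set: T] -> zero_dimensional T.
Proof.
move=> tdT x y xy; apply: contrapT => nC.
have Qy : quasi_component x y.
  by move=> C [cC Cx]; apply: contrapT => nCy; apply: nC; exists C.
have Qx : quasi_component x x by exact: quasi_component_refl.
have : connected_component [set: T] x y.
  by exists (quasi_component x) => //; split => //; exact: connected_quasi_component.
by rewrite tdT // => yx; move: xy; rewrite yx eqxx.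
Qed.

Lemma clopen_nbhs_sub (x : T) (W : set T) : totally_disconnected [set: T] ->
  nbhs x W -> exists C, [/\ clopen C, C x & C `<=` W].
Proof.
move=> tdT /(zero_dimensional_cvg hT (totally_disconnected_zero_dimensional tdT) cT).
by case=> C [Cx cC] CW; exists C.
Qed.

End CompactHausdorff.

Section NearPoint.
Variables (R : realType) (X : topologicalType) (A : UCstarAlg R).
Variables (phi : (X -> R[i]) -> A) (hphi : is_CX_structure phi) (x : X).
Local Notation T := (cstar_ring A).
Local Notation P U := (indic_proj phi U).

(* A weak form of [r = 0] in the fibre [A_x]. *)
Definition vanishes_near (r : T) := forall e, 0 < e ->
  exists2 W, nbhs x W & forall U, clopen U -> U `<=` W -> cnorm (P U * r) < e.

Lemma vanishes_nearD a b : vanishes_near a -> vanishes_near b -> vanishes_near (a + b).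
Proof.
move=> va vb e e0; have e2 : 0 < e / 2 by rewrite divr_gt0.
have [W1 W1x h1] := va _ e2; have [W2 W2x h2] := vb _ e2.
exists (W1 `&` W2); first exact: filterI.
move=> U cU UW; rewrite mulrDr; apply: le_lt_trans (cnormD _ _) _.
have := h1 U cU (fun z Uz => (UW z Uz).1); have := h2 U cU (fun z Uz => (UW z Uz).2).
lra.
Qed.

Lemma vanishes_nearMM a c d : vanishes_near a -> vanishes_near (c * a * d).
Proof.
move=> va e e0.
have k0 : 0 < cnorm c * cnorm d + 1 by rewrite ltr_wpDl // mulr_ge0 // cnorm_ge0.
have [W Wx h] := va _ (divr_gt0 e0 k0).
exists W => // U cU UW.
have -> : P U * (c * a * d) = c * (P U * a) * d.
  by rewrite !mulrA (indic_proj_central hphi c cU).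
have := h U cU UW; rewrite ltr_pdivlMr // => hU.
apply: le_lt_trans (cnormM _ _) _.
apply: le_lt_trans (ler_wpM2r (cnorm_ge0 d) (cnormM _ _)) _.
have := cnorm_ge0 c; have := cnorm_ge0 d; have := cnorm_ge0 (P U * a); nra.
Qed.

(* Cutting down by a clopen set on which the [f_i] (vanishing at [x]) are
   small makes each term [phi f_i a_i] small. *)
Lemma fibre_ideal_vanishes_near (r : T) : fibre_ideal phi x r -> vanishes_near r.
Proof.
move=> hr e e0.
have [n [fs [as_ [hfs hn]]]] := hr _ (divr_gt0 e0 (ltr0n R 2)).
pose S := \sum_(i < n) cnorm (as_ i).
have S0 : 0 <= S by apply: sumr_ge0 => i _; exact: cnorm_ge0.
pose eta := e / (4 * (S + 1)).
have S1 : 0 < S + 1 by rewrite ltr_wpDl.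
have eta0 : 0 < eta by rewrite divr_gt0 // mulr_gt0.
pose W t := forall i : 'I_n,
  `|complex.Re (fs i t)| < eta /\ `|complex.Im (fs i t)| < eta.
have Wx : nbhs x W.
  have small (g : X -> R) : {for x, continuous g} -> g x = 0 ->
      \forall t \near x, `|g t| < eta.
    move=> cg gx; have /cvgrPdist_lt/(_ _ eta0) := cg.
    by apply: filterS => t; rewrite gx sub0r normrN.
  apply: filter_forall => i; have [[c1 c2] fx] := hfs i.
  have near_re := small _ (c1 x) (congr1 (@complex.Re R) fx).
  have near_im := small _ (c2 x) (congr1 (@complex.Im R) fx).
  exact: filterS (filterI near_re near_im).
exists W => // U cU UW.
pose s := \sum_(i < n) (phi (fs i) : T) * as_ i.
have -> : P U * r = P U * (r - s) + \sum_(i < n) P U * ((phi (fs i) : T) * as_ i).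
  by rewrite -mulr_sumr -mulrDr subrK.
apply: le_lt_trans (cnormD _ _) _.
have b1 : cnorm (P U * (r - s)) < e / 2.
  apply: le_lt_trans (cnormM _ _) _.
  have := cnorm_proj (indic_proj_cstar hphi cU) (indic_proj_idem hphi cU).
  have := cnorm_ge0 (r - s); have := cnorm_ge0 (P U); have := hn; rewrite -/(cnorm _).
  nra.
have b2 : \sum_(i < n) cnorm (P U * ((phi (fs i) : T) * as_ i)) <= 2 * eta * S.
  rewrite /S mulr_sumr; apply: ler_sum => i _.
  have [ci _] := hfs i.
  rewrite mulrA /indic_proj -(phiM hphi (ccontinuous_indic R cU) ci).
  apply: le_trans (cnormM _ _) _; apply: ler_wpM2r; first exact: cnorm_ge0.
  apply: cnorm_phi_le => //; first exact: ccontinuousM (ccontinuous_indic R cU) ci.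
  move=> t; rewrite indic_complex complex_ReM complex_ImM /= !mul0r subr0 addr0 indicE.
  have [/set_mem/UW/(_ i) [h1 h2]|_] := boolP (t \in U); rewrite ?mul1r ?mul0r.
    by split; exact: ltW.
  by rewrite normr0; split; exact: ltW.
have b3 : 2 * eta * S < e / 2.
  rewrite /eta ltr_pdivlMr // (_ : _ * 2 = e * S / (S + 1)); last by field; rewrite gt_eqF.
  by rewrite ltr_pdivrMr // ltr_pM2l // ltrDl.
have := cnorm_sum (fun i => P U * ((phi (fs i) : T) * as_ i)); lra.
Qed.

Definition fibre_close (a b : T) := vanishes_near (a - b).

Lemma fibre_eq_close (a b : T) : fibre_eq phi x a b -> fibre_close a b.
Proof. exact: fibre_ideal_vanishes_near. Qed.

Lemma fibre_close_trans b a c : fibre_close a b -> fibre_close b c -> fibre_close a c.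
Proof.
by move=> ab bc; rewrite /fibre_close -[a](subrK b) -addrA; exact: vanishes_nearD.
Qed.

Lemma fibre_close_sym a b : fibre_close a b -> fibre_close b a.
Proof.
by move=> /(vanishes_nearMM (-1) 1); rewrite /fibre_close mulr1 mulN1r opprB.
Qed.

Lemma fibre_close_mul c a b d : fibre_close a b -> fibre_close (c * a * d) (c * b * d).
Proof. by move=> /(vanishes_nearMM c d); rewrite /fibre_close mulrBr mulrBl. Qed.

(* Insert [v v^* ~ 1] on the left and [w w^* ~ 1] on the right of [v w^*]:
   what is left in the middle is [e f ~ 0]. *)
Lemma fibre_close_isometries_orth (e f v w : T) :
  fibre_close (cstar v * v) e -> fibre_close (v * cstar v) 1 ->
  fibre_close (cstar w * w) f -> fibre_close (w * cstar w) 1 ->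
  fibre_close (e * f) 0 -> fibre_close (v * cstar w) 0.
Proof.
move=> vv vv1 ww ww1 ef.
apply: (fibre_close_trans (b := v * cstar v * (v * cstar w))).
  by have := fibre_close_mul 1 (v * cstar w) (fibre_close_sym vv1); rewrite !mul1r.
apply: (fibre_close_trans (b := v * e * cstar w)).
  by have := fibre_close_mul v (cstar w) vv; rewrite !mulrA.
apply: (fibre_close_trans (b := v * e * cstar w * (w * cstar w))).
  by have := fibre_close_mul (v * e * cstar w) 1 (fibre_close_sym ww1); rewrite !mulr1.
apply: (fibre_close_trans (b := v * e * f * cstar w)).
  by have := fibre_close_mul (v * e) (cstar w) ww; rewrite !mulrA.
by have := fibre_close_mul v (cstar w) ef; rewrite !mulrA mulr0 mul0r.
Qed.

End NearPoint.

Section Glueing.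
Variables (R : realType) (X : topologicalType) (A : UCstarAlg R).
Variables (phi : (X -> R[i]) -> A) (hphi : is_CX_structure phi).
Local Notation P U := (indic_proj phi U).

Lemma corner_properly_infinite_setU (U V : set X) : clopen U -> clopen V ->
  corner_properly_infinite (P U) -> corner_properly_infinite (P V) ->
  corner_properly_infinite (P (U `|` V)).
Proof.
move=> cU cV pU pV.
have cD : clopen (V `&` ~` U) by apply: clopenI => //; exact: clopenC.
have UD0 : U `&` (V `&` ~` U) = set0 by apply/seteqP; split => // z [? [_ ?]].
have -> : U `|` V = U `|` (V `&` ~` U).
  apply/seteqP; split => z; last by case=> [|[]]; [left|right].
  by case=> [Uz|Vz]; [left | have [Uz|nUz] := pselect (U z); [left|right]].
rewrite indic_projU //; apply: corner_properly_infinite_add.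
- exact: indic_proj_cstar.
- exact: indic_proj_cstar.
- by move=> a; exact: indic_proj_central.
- by move=> a; exact: indic_proj_central.
- exact: indic_proj_idem.
- exact: indic_proj_idem.
- by rewrite -indic_projI // UD0 indic_proj0.
- exact: pU.
- apply: corner_properly_infinite_sub pV.
  by rewrite -indic_projI // -setIA setIC -setIA setIid setIC.
Qed.

Hypotheses (cX : compact [set: X]) (hX : hausdorff_space X)
  (tdX : totally_disconnected [set: X]).

(* The fibre relations give [t1 = v^*], [t2 = w^*] with [t1^* t1 ~ 1],
   [t2^* t2 ~ 1], [t1^* t2 ~ 0] in the fibre, so these hold up to [1/32]
   on a small clopen neighbourhood of [x]. *)
Lemma corner_properly_infinite_near (x : X) : fibre_properly_infinite phi x ->
  exists C, [/\ clopen C, C x & corner_properly_infinite (P C)].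
Proof.
move=> [e [f [v [w [[_ _] [_ _] ef [vv vv1] [ww ww1]]]]]].
have close (a b : cstar_ring A) : fibre_eq phi x a b -> fibre_close phi x a b.
  exact: fibre_eq_close.
have vw := fibre_close_isometries_orth hphi (close _ _ vv) (close _ _ vv1)
  (close _ _ ww) (close _ _ ww1) (close _ _ ef).
have e0 : (0 : R) < 32^-1 by rewrite invr_gt0.
have [W1 W1x h1] := close _ _ vv1 _ e0.
have [W2 W2x h2] := close _ _ ww1 _ e0.
have [W3 W3x h3] := vw _ e0.
have [C [cC Cx CW]] := clopen_nbhs_sub hX cX tdX (filterI (filterI W1x W2x) W3x).
exists C; split => //.
apply: (@corner_properly_infinite_of_almost R A _ _ _ _ (cstar v) (cstar w)).
- exact: indic_proj_cstar.
- exact: indic_proj_idem.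
- by move=> a; exact: indic_proj_central.
- by rewrite cstarK -[X in _ - X]mulr1 -mulrBr; apply/ltW/h1 => // z /CW [[Wz _] _].
- by rewrite cstarK -[X in _ - X]mulr1 -mulrBr; apply/ltW/h2 => // z /CW [[_ Wz] _].
- by rewrite cstarK -[X in _ * X]subr0; apply/ltW/h3 => // z /CW [_ Wz].
Qed.

End Glueing.

Theorem proposition6p4 (R : realType) (X : topologicalType)
  (A : UCstarAlg R) (phi : (X -> R[i]) -> A) :
  compact [set: X] -> hausdorff_space X -> totally_disconnected [set: X] ->
  is_CX_structure phi ->
  (forall x : X, fibre_properly_infinite phi x) ->
  properly_infinite A.
Proof.
move=> cX hX tdX hphi hfib.
pose G := [set U : set X | clopen U /\ corner_properly_infinite (indic_proj phi U)].
have [S [_ pS] XS] : exists2 S, G S & [set: X] `<=` S.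
  apply: compact_directed_cover => //.
  - by split; [exact: clopen0 | rewrite indic_proj0 //; exact: corner_properly_infinite0].
  - move=> U V [cU pU] [cV pV]; split; first exact: clopenU.
    exact: corner_properly_infinite_setU.
  - by move=> U [[]].
  - move=> x _.
    have [C [cC Cx pC]] := corner_properly_infinite_near hphi cX hX tdX (hfib x).
    by exists C.
apply: properly_infinite_corner1.
by move: pS; rewrite (_ : S = setT) ?indic_projT //; apply/seteqP; split.
Qed.
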